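(* Let $\pi$ be a set of primes and $G$ a group. Let $A$ be a $\mathbb ZG$-module whose additive group is divisible, and let $B$ be a finite $\mathbb ZG$-submodule of $A$. Suppose there is a $\mathbb ZG$-module epimorphism $\theta:U\to A/B$, where $U$ is a $\mathbb ZG$-module whose additive group is torsion-free of finite rank and $\pi$-spectral. Then $A$ is a $\mathbb ZG$-module quotient of some $\mathbb ZG$-module whose additive group is torsion-free of finite rank and $\pi$-spectral.
   Context: An abelian group has finite rank if its torsion-free rank and all $p$-ranks are finite; it is $\pi$-spectral if every prime $p$ for which it has a section isomorphic to $\mathbb Z_{p^\infty}$ lies in $\pi$. *)

From HB Require Import structures.
From mathcomp Require Import all_boot all_order all_algebra all_field.
Set Implicit Arguments. Unset Strict Implicit. Unset Printing Implicit Defensive.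
Import Order.TTheory GRing.Theory Num.Theory.
Local Open Scope ring_scope.

Definition is_group (G : Type) (mul : G -> G -> G) (one : G) (inv : G -> G) : Prop :=
  [/\ forall x y z, mul x (mul y z) = mul (mul x y) z,
      forall x, mul one x = x &
      forall x, mul (inv x) x = one].

Definition is_ZGmodule (G : Type) (mul : G -> G -> G) (one : G)
    (M : zmodType) (act : G -> M -> M) : Prop :=
  [/\ forall g x y, act g (x + y) = act g x + act g y,
      forall x, act one x = x &
      forall g h x, act (mul g h) x = act g (act h x)].

Definition is_ZGhom (G : Type) (M N : zmodType) (actM : G -> M -> M)
    (actN : G -> N -> N) (f : M -> N) : Prop :=
  (forall x y, f (x + y) = f x + f y) /\ (forall g x, f (actM g x) = actN g (f x)).

Definition is_ZGepi (G : Type) (M N : zmodType) (actM : G -> M -> M)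
    (actN : G -> N -> N) (f : M -> N) : Prop :=
  is_ZGhom actM actN f /\ (forall y, exists x, f x = y).

Definition is_subgroup (M : zmodType) (H : M -> Prop) : Prop :=
  H 0 /\ (forall x y, H x -> H y -> H (x - y)).

Definition is_ZGsubmodule (G : Type) (M : zmodType) (act : G -> M -> M)
    (B : M -> Prop) : Prop :=
  is_subgroup B /\ (forall g x, B x -> B (act g x)).

Definition finite_set (M : zmodType) (B : M -> Prop) : Prop :=
  exists s : seq M, forall x, B x -> x \in s.

Definition divisible (M : zmodType) : Prop :=
  forall (n : nat) (x : M), (0 < n)%N -> exists y, y *+ n = x.

Definition torsion_free (M : zmodType) : Prop :=
  forall (n : nat) (x : M), (0 < n)%N -> x *+ n = 0 -> x = 0.

Definition Z_independent (M : zmodType) (s : seq M) : Prop :=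
  forall c : seq int, size c = size s ->
    \sum_(i < size s) (s`_i *~ c`_i) = 0 -> forall i, c`_i = 0.

Definition Fp_independent (M : zmodType) (p : nat) (s : seq M) : Prop :=
  (forall i, (i < size s)%N -> s`_i *+ p = 0) /\
  forall c : seq nat, size c = size s ->
    \sum_(i < size s) (s`_i *+ nth 0%N c i) = 0 -> forall i, (p %| nth 0%N c i)%N.

Definition finite_rank (M : zmodType) : Prop :=
  (exists r : nat, forall s : seq M, Z_independent s -> (size s <= r)%N) /\
  (forall p : nat, prime p ->
     exists r : nat, forall s : seq M, Fp_independent p s -> (size s <= r)%N).

(* The Pruefer group Z_{p^oo}, realised as the multiplicative group of
   p-power roots of unity in algC. *)
Definition prufer_elt (p : nat) (z : algC) : Prop := exists n : nat, z ^+ (p ^ n) = 1.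

(* M has a section H/K isomorphic to Z_{p^oo}: a subgroup H and an
   epimorphism f from H onto Z_{p^oo} (K is then its kernel). *)
Definition has_prufer_section (M : zmodType) (p : nat) : Prop :=
  exists (H : M -> Prop) (f : M -> algC),
    [/\ is_subgroup H,
        forall x y, H x -> H y -> f (x + y) = f x * f y,
        forall x, H x -> prufer_elt p (f x) &
        forall z, prufer_elt p z -> exists2 x, H x & f x = z].

Definition spectral (pi : pred nat) (M : zmodType) : Prop :=
  forall p : nat, prime p -> has_prufer_section M p -> p \in pi.

From HB Require Import structures.
From mathcomp Require Import all_boot all_order all_algebra all_field.
From Stdlib Require Import ClassicalEpsilon.
Set Implicit Arguments. Unset Strict Implicit.
Import Order.TTheory GRing.Theory Num.Theory.
Local Open Scope ring_scope.

(* The finite submodule B has some exponent e > 0.  Multiplication by e on A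
   kills B, so it factors through A/B as a ZG-map A/B -> A, which is onto
   because A is divisible.  Composing it with theta, U itself is the required
   torsion-free, finite-rank, pi-spectral module mapping onto A. *)

Lemma additive_sub (M N : zmodType) (f : M -> N) :
  (forall x y, f (x + y) = f x + f y) -> forall x y, f (x - y) = f x - f y.
Proof.
move=> f_add x y; have := f_add (x - y) y; rewrite subrK => ->.
by rewrite addrK.
Qed.

Lemma additive_mulrn (M N : zmodType) (f : M -> N) :
  (forall x y, f (x + y) = f x + f y) -> forall x n, f (x *+ n) = f x *+ n.
Proof.
move=> f_add x; elim=> [|n IHn]; last by rewrite !mulrS f_add IHn.
by rewrite !mulr0n; have := additive_sub f_add 0 0; rewrite !subrr.
Qed.

Lemma subgroup_mulrn (M : zmodType) (H : M -> Prop) :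
  is_subgroup H -> forall x n, H x -> H (x *+ n).
Proof.
case=> H0 HB x n Hx; elim: n => [|n IHn]; first by rewrite mulr0n.
have HN y : H y -> H (- y) by move=> Hy; rewrite -sub0r; apply: HB.
by rewrite mulrS; have := HB _ _ Hx (HN _ IHn); rewrite opprK.
Qed.

(* Pigeonhole on the multiples b *+ 0, ..., b *+ (size s), all lying in s. *)
Lemma finite_subgroup_order (M : zmodType) (H : M -> Prop) (s : seq M) :
  is_subgroup H -> (forall x, H x -> x \in s) ->
  forall b, H b -> exists2 k, (0 < k <= size s)%N & b *+ k = 0.
Proof.
move=> subH Hs b Hb; set t := [seq b *+ i | i <- iota 0 (size s).+1].
have /negP : ~~ uniq t.
  apply/negP=> /uniq_leq_size t_le.
  have t_sub : {subset t <= undup s}.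
    by move=> y /mapP [i _ ->]; rewrite mem_undup; apply: Hs; exact: subgroup_mulrn.
  have := leq_trans (t_le _ t_sub) (size_undup s).
  by rewrite size_map size_iota ltnn.
move/negP/(uniqPn 0) => [i [j [lt_ij]]].
rewrite size_map size_iota => lt_j.
rewrite !(nth_map 0%N) ?size_iota ?(ltn_trans lt_ij) //.
rewrite !nth_iota ?(ltn_trans lt_ij) // !add0n => eq_ij.
exists (j - i)%N; last by rewrite mulrnBr ?(ltnW lt_ij) // eq_ij subrr.
by rewrite subn_gt0 lt_ij (leq_trans (leq_subr i j)) // -ltnS.
Qed.

Lemma finite_subgroup_exponent (M : zmodType) (H : M -> Prop) (s : seq M) :
  is_subgroup H -> (forall x, H x -> x \in s) ->
  forall b, H b -> b *+ (size s)`! = 0.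
Proof.
move=> subH Hs b Hb; have [k /andP [k_gt0 k_le] bk0] := finite_subgroup_order subH Hs Hb.
have /dvdnP [m ->] : (k %| (size s)`!)%N by apply: dvdn_fact; rewrite k_gt0.
by rewrite mulnC mulrnA bk0 mul0rn.
Qed.

Lemma is_ZGepi_comp (G : Type) (M N P : zmodType) (actM : G -> M -> M)
    (actN : G -> N -> N) (actP : G -> P -> P) (f : M -> N) (h : N -> P) :
  is_ZGepi actM actN f -> is_ZGepi actN actP h -> is_ZGepi actM actP (h \o f).
Proof.
move=> [[f_add f_act] f_surj] [[h_add h_act] h_surj]; split; first split.
- by move=> x y /=; rewrite f_add h_add.
- by move=> g x /=; rewrite f_act h_act.
move=> z; have [y <-] := h_surj z; have [x <-] := f_surj y; by exists x.
Qed.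

Section MulrnThroughQuotient.

Variables (G : Type) (A Q : zmodType) (actA : G -> A -> A) (actQ : G -> Q -> Q).
Variables (q : A -> Q) (e : nat).
Hypothesis actA_add : forall g x y, actA g (x + y) = actA g x + actA g y.
Hypothesis q_epi : is_ZGepi actA actQ q.
Hypothesis q_ker_exponent : forall a, q a = 0 -> a *+ e = 0.

Definition mulrn_lift (y : Q) : A := epsilon (inhabits 0) (fun a => q a = y) *+ e.

Let q_add : forall x y, q (x + y) = q x + q y. Proof. by case: q_epi => [[]]. Qed.

Lemma mulrn_liftE a y : q a = y -> mulrn_lift y = a *+ e.
Proof.
move=> qa; have /epsilon_spec : exists a, q a = y by exists a.
move=> /(_ (inhabits 0)); set a' := epsilon _ _ => qa'.
apply/eqP; rewrite /mulrn_lift -/a' -subr_eq0 -mulrnBl.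
by apply/eqP/q_ker_exponent; rewrite (additive_sub q_add) qa qa' subrr.
Qed.

Lemma mulrn_lift_ZGhom : is_ZGhom actQ actA mulrn_lift.
Proof.
have [[_ q_act] q_surj] := q_epi.
have mulrn_lift_q a : mulrn_lift (q a) = a *+ e by apply: mulrn_liftE.
split=> [y z | g y]; have [a <-] := q_surj y.
- by have [b <-] := q_surj z; rewrite -q_add !mulrn_lift_q mulrnDl.
- by rewrite -q_act !mulrn_lift_q (additive_mulrn (actA_add g)).
Qed.

Lemma mulrn_lift_ZGepi : divisible A -> (0 < e)%N -> is_ZGepi actQ actA mulrn_lift.
Proof.
move=> A_div e_gt0; split; first exact: mulrn_lift_ZGhom.
move=> a; have [a' <-] := A_div e a e_gt0.
by exists (q a'); apply: mulrn_liftE.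
Qed.

End MulrnThroughQuotient.

Theorem lemma4p5 (pi : pred nat)
    (G : Type) (mul : G -> G -> G) (one : G) (inv : G -> G)
    (hG : is_group mul one inv)
    (A : zmodType) (actA : G -> A -> A) (hA : is_ZGmodule mul one actA)
    (hAdiv : divisible A)
    (B : A -> Prop) (hB : is_ZGsubmodule actA B) (hBfin : finite_set B)
    (Q : zmodType) (actQ : G -> Q -> Q) (hQ : is_ZGmodule mul one actQ)
    (q : A -> Q) (hq : is_ZGepi actA actQ q) (hqker : forall a, q a = 0 <-> B a)
    (U : zmodType) (actU : G -> U -> U) (hU : is_ZGmodule mul one actU)
    (hUtf : torsion_free U) (hUrk : finite_rank U) (hUsp : spectral pi U)
    (theta : U -> Q) (htheta : is_ZGepi actU actQ theta) :
  exists (V : zmodType) (actV : G -> V -> V) (phi : V -> A),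
    [/\ is_ZGmodule mul one actV, torsion_free V, finite_rank V,
        spectral pi V & is_ZGepi actV actA phi].
Proof.
have [s Bs] := hBfin; have [subB _] := hB; have [actA_add _ _] := hA.
have q_ker_exponent a : q a = 0 -> a *+ (size s)`! = 0.
  by move/hqker; exact: finite_subgroup_exponent subB Bs a.
exists U, actU, (mulrn_lift q (size s)`! \o theta); split=> //.
apply: is_ZGepi_comp htheta _.
apply: (mulrn_lift_ZGepi actA_add hq q_ker_exponent hAdiv); exact: fact_gt0.
Qed.
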